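(* Let $T\in D(\nu)$ and $\lambda_1\in\mathcal P$. Then $\lambda(\lambda_1),\alpha(\lambda_1)\in\mathcal P^k$ and $T\in\underline{\mathrm{CLR}}^{\lambda(\lambda_1)}_{\alpha(\lambda_1),\nu}$ if and only if $\lambda_1\ge\lambda_{\min}(T)$.
   Context: Identify a partition $\lambda=(a_1\ge a_2\ge\cdots)$ with $\sum_ja_j\epsilon_j$ in $\Lambda=\bigoplus_{j\ge1}\mathbb Z\epsilon_j$; put $\omega_i=\epsilon_1+\dots+\epsilon_i$; partitions are exactly elements of $\Lambda$ with all $\omega$-coordinates $\ge0$. For $x,y\in\Lambda$, $y\le x$ means $x-y$ has all $\omega$-coordinates $\ge0$. $\mathcal P$ = partitions, $\mathcal P^k$ = $k$-tuples of partitions. $SST(\nu)$ = semistandard tableaux of shape $\nu$ with entries in $\mathbb Z_{>0}$, with the standard $\mathfrak{gl}_\infty$-crystal structure (operators $\tilde e_i$). For $T\in SST(\nu)$: $\mathrm{wt}(T)=\sum_j(\#\text{entries }j)\epsilon_j$, $\varepsilon_i(T)=\max\{m\ge0:\tilde e_i^mT\ne0\}$, $\varepsilon(T)=\sum_i\varepsilon_i(T)\omega_i$. $\mathrm{CLR}^\lambda_{\alpha,\nu}=\{T\in SST(\nu):\varepsilon(T)\le\alpha,\ \alpha+\mathrm{wt}(T)=\lambda\}$. Fix $k\ge1$ and partitions $\nu=(\nu_1^+,\nu_1^-,\dots,\nu_k^+,\nu_k^-)$; indices cyclic mod $k$ ($\lambda_0:=\lambda_k$). $\underline{SST}(\nu)=\prod_iSST(\nu_i^+)\times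 SST(\nu_i^-)$, elements $T=(T_1^+,T_1^-,\dots,T_k^+,T_k^-)$, $T_i=(T_i^+,T_i^-)$, $\mathrm{wt}(T_i)=\mathrm{wt}(T_i^+)-\mathrm{wt}(T_i^-)$. $\underline{\mathrm{CLR}}^\lambda_{\alpha,\nu}=\prod_{i=1}^k\mathrm{CLR}^{\lambda_i}_{\alpha_i,\nu_i^+}\times\mathrm{CLR}^{\lambda_{i-1}}_{\alpha_i,\nu_i^-}$ for $\lambda,\alpha\in\mathcal P^k$. $T$ is distinguished if it lies in some $\underline{\mathrm{CLR}}^\lambda_{\alpha,\nu}$; $D(\nu)$ is the set of distinguished $T$ (equivalently those with $\sum_j\mathrm{wt}(T_j)=0$). For $T\in\underline{SST}(\nu)$ and $\lambda_1\in\mathcal P$, $\lambda(\lambda_1)=(\lambda_1,\dots,\lambda_k)$ and $\alpha(\lambda_1)=(\alpha_1,\dots,\alpha_k)$ are the elements of $\Lambda^k$ given by $\lambda_i=\lambda_1+\sum_{j=2}^i\mathrm{wt}(T_j)$, $\alpha_i=\lambda_1-\mathrm{wt}(T_i^+)+\sum_{j=2}^i\mathrm{wt}(T_j)$. For $T\in D(\nu)$, $\lambda_{\min}(T)\in\Lambda$ is the least upper bound with respect to $\le$ (coordinatewise maximum of $\omega$-coordinates) of the $2k$ elements $S_i^\pm=\varepsilon(T_i^\pm)+\mathrm{wt}(T_i^+)-\sum_{j=2}^i\mathrm{wt}(T_j)$, $i=1,\dots,k$; it is a partition. *)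

From mathcomp Require Import all_boot all_order all_algebra.
Set Implicit Arguments. Unset Strict Implicit. Unset Printing Implicit Defensive.
Import Order.TTheory GRing.Theory Num.Theory.
Local Open Scope ring_scope.

(* The lattice Lambda = (+)_{j>=1} Z eps_j.  An element is represented by a
   function  x : nat -> int  with  x j = coefficient of eps_{j+1}
   (0-based indexing); elements of Lambda are the finitely supported ones. *)
Definition vec := nat -> int.

Definition finsupp (x : vec) : Prop := exists N : nat, forall j, (N <= j)%N -> x j = 0.

(* omega-coordinates: x = sum_i (omc x i) omega_{i+1}, omega_i = eps_1+...+eps_i *)
Definition omc (x : vec) (i : nat) : int := x i - x i.+1.

(* the element  sum_{i < N} c i * omega_{i+1}  of Lambda *)
Definition omega_comb (c : nat -> int) (N : nat) : vec :=
  fun j => \sum_(j <= i < N) c i.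

Definition is_partition (x : vec) : Prop := finsupp x /\ forall i, 0 <= omc x i.

Definition lel (y x : vec) : Prop := forall i, omc y i <= omc x i.

Definition vadd (x y : vec) : vec := fun j => x j + y j.
Definition vsub (x y : vec) : vec := fun j => x j - y j.

(* Tableaux: a tableau is the list of its rows (English notation, top row
   first).  Shapes of tableaux are partitions given as weakly decreasing
   lists of (nat) parts. *)
Definition tableau := seq (seq nat).

Definition is_shape (nu : seq nat) : bool := sorted geq nu.

Definition shape (T : tableau) : seq nat := map size T.

Definition SST (nu : seq nat) (T : tableau) : Prop :=
  [/\ shape T = nu,
      all (all (fun a => 0 < a)%N) T,
      all (sorted leq) T &
      forall r c : nat, (c < size (nth [::] T r.+1))%N ->
        (nth 0 (nth [::] T r) c < nth 0 (nth [::] T r.+1) c)%N].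

Definition read (T : tableau) : seq nat := flatten (rev T).

Definition unread (sh : seq nat) (w : seq nat) : tableau := rev (reshape (rev sh) w).

Definition wt (T : tableau) : vec := fun j => (count_mem j.+1 (read T))%:Z.

Definition maxentry (T : tableau) : nat := \max_(a <- read T) a.

(* gl_infinity crystal structure (signature rule).  For the letters i, i+1
   of a word, each i+1 followed later by an i that is not already matched is
   cancelled with it; the remaining (unmatched) letters read i..i (i+1)..(i+1).
   brk i w = (number of unmatched i's, positions of unmatched (i+1)'s, increasing). *)
Fixpoint brk (i : nat) (w : seq nat) : nat * seq nat :=
  match w with
  | [::] => (0%N, [::])
  | a :: w' =>
      let (c, U) := brk i w' in
      let U' := map S U in
      if a == i.+1 then (if (0 < c)%N then (c.-1, U') else (0%N, 0%N :: U'))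
      else if a == i then (c.+1, U') else (c, U')
  end.

(* e_i on words: change the leftmost unmatched i+1 into i; None = 0 *)
Definition e_word (i : nat) (w : seq nat) : option (seq nat) :=
  match (brk i w).2 with
  | p :: _ => Some (set_nth 0%N w p i)
  | [::] => None
  end.

Definition etilde (i : nat) (T : tableau) : option tableau :=
  omap (unread (shape T)) (e_word i (read T)).

Fixpoint eiter (i m : nat) (T : tableau) : option tableau :=
  match m with
  | 0 => Some T
  | m'.+1 => obind (etilde i) (eiter i m' T)
  end.

(* eps_i(T) = max { m >= 0 : e_i^m T <> 0 }   (each application of e_i turns
   one letter i+1 into i, so m <= size (read T)) *)
Definition eps_i (i : nat) (T : tableau) : nat :=
  \max_(m < (size (read T)).+1 | eiter i m T != None) m.

(* eps(T) = sum_{i>=1} eps_i(T) omega_i  (eps_i(T) = 0 once i >= maxentry T) *)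
Definition epsv (T : tableau) : vec :=
  omega_comb (fun i => (eps_i i.+1 T)%:Z) (maxentry T).

Definition CLR (lam alp : vec) (nu : seq nat) (T : tableau) : Prop :=
  [/\ SST nu T, lel (epsv T) alp & forall j, alp j + wt T j = lam j].

(* k-tuples: paper index i = 1..k corresponds to index i-1 = 0..k-1 here;
   nu_i^+ = nup (i-1), nu_i^- = num (i-1), T_i^+ = Tp (i-1), T_i^- = Tm (i-1).
   Cyclic predecessor (lambda_0 := lambda_k). *)
Definition cpred (k i : nat) : nat := if i is i'.+1 then i' else k.-1.

Definition uSST (k : nat) (nup num : nat -> seq nat) (Tp Tm : nat -> tableau) : Prop :=
  forall i, (i < k)%N -> SST (nup i) (Tp i) /\ SST (num i) (Tm i).

Definition uCLR (k : nat) (lam alp : nat -> vec) (nup num : nat -> seq nat)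
    (Tp Tm : nat -> tableau) : Prop :=
  forall i, (i < k)%N ->
    CLR (lam i) (alp i) (nup i) (Tp i) /\ CLR (lam (cpred k i)) (alp i) (num i) (Tm i).

Definition is_ptuple (k : nat) (lam : nat -> vec) : Prop :=
  forall i, (i < k)%N -> is_partition (lam i).

Definition distinguished (k : nat) (nup num : nat -> seq nat) (Tp Tm : nat -> tableau) : Prop :=
  exists lam alp : nat -> vec,
    [/\ is_ptuple k lam, is_ptuple k alp & uCLR k lam alp nup num Tp Tm].

Definition wtT (Tp Tm : nat -> tableau) (i : nat) : vec := vsub (wt (Tp i)) (wt (Tm i)).

(* sum_{j=2}^{i} wt(T_j) in paper indexing, i.e. sum over 1 <= j <= i here *)
Definition sumwt (Tp Tm : nat -> tableau) (i : nat) : vec :=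
  fun c => \sum_(1 <= j < i.+1) wtT Tp Tm j c.

Definition lamF (Tp Tm : nat -> tableau) (lam1 : vec) : nat -> vec :=
  fun i => vadd lam1 (sumwt Tp Tm i).

Definition alpF (Tp Tm : nat -> tableau) (lam1 : vec) : nat -> vec :=
  fun i => vadd (vsub lam1 (wt (Tp i))) (sumwt Tp Tm i).

Definition Sp (Tp Tm : nat -> tableau) (i : nat) : vec :=
  vsub (vadd (epsv (Tp i)) (wt (Tp i))) (sumwt Tp Tm i).
Definition Sm (Tp Tm : nat -> tableau) (i : nat) : vec :=
  vsub (vadd (epsv (Tm i)) (wt (Tp i))) (sumwt Tp Tm i).

(* lambda_min(T): least upper bound w.r.t. <= of the 2k elements S_i^{+-},
   i.e. the element of Lambda whose omega-coordinates are the coordinatewise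
   maxima.  All these omega-coordinates vanish from index M on, M the
   largest entry of all tableaux, so the omega-expansion is a finite sum. *)
Definition lam_min (k : nat) (Tp Tm : nat -> tableau) : vec :=
  let M := (\max_(l < k) maxn (maxentry (Tp l)) (maxentry (Tm l)))%N in
  omega_comb
    (fun i => \big[Order.max/omc (Sp Tp Tm 0) i]_(l < k)
                 Order.max (omc (Sp Tp Tm l) i) (omc (Sm Tp Tm l) i)) M.

From mathcomp Require Import all_boot all_order all_algebra.
From mathcomp Require Import zify.
Set Implicit Arguments. Unset Strict Implicit. Unset Printing Implicit Defensive.
Import Order.TTheory GRing.Theory Num.Theory.
Local Open Scope ring_scope.

(* In omega-coordinates everything is affine in lam1: alpha_i(lam1) - eps(T_i^+-)
   = lam1 - S_i^+-, so the eps-conditions of the CLR sets say exactly S_i^+- <= lam1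
   for all i, i.e. lam_min(T) <= lam1.  The weight conditions hold for every lam1
   (for i = 1 by telescoping, T being distinguished), and lambda(lam1), alpha(lam1)
   are then partitions because eps(T) + wt(T) >= 0 for every tableau T.  The last
   fact is the signature rule: #(i+1) - #i = #(unmatched i+1) - #(unmatched i), and
   e_i can be applied once for each unmatched letter i+1, so #(i+1) - #i <= eps_i(T). *)

Lemma brk_unmatched_lt_size i w : all (fun p => p < size w)%N (brk i w).2.
Proof.
elim: w => //= a w IH; case E: (brk i w) => [c U]; rewrite E /= in IH.
have H : all (fun p => p < (size w).+1)%N (map S U).
  by rewrite all_map; apply: sub_all IH => p /=.
by case: ifP => _; [case: ifP => _ //=|case: ifP].
Qed.

Lemma size_brk_unmatched i w : (size (brk i w).2 <= size w)%N.
Proof.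
elim: w => //= a w IH; case E: (brk i w) => [c U]; rewrite E /= in IH.
by case: ifP => _; [case: ifP => _ /=|case: ifP => _]; rewrite /= ?size_map; lia.
Qed.

Lemma brk_count_mem i w :
  ((brk i w).1 + count_mem i.+1 w = size (brk i w).2 + count_mem i w)%N.
Proof.
elim: w => //= a w IH; case E: (brk i w) => [c U]; rewrite E /= in IH.
have [-> | _] := eqVneq a i.+1.
  by rewrite gtn_eqF //; case: ifP => hc; rewrite /= size_map; lia.
by have [_ | _] := eqVneq a i; rewrite /= size_map; lia.
Qed.

(* Changing the leftmost unmatched i+1 into i leaves the other matchings intact. *)
Lemma brk_set_nth_unmatched i w c p U : brk i w = (c, p :: U) ->
  brk i (set_nth 0%N w p i) = (c.+1, U).
Proof.
elim: w c p U => //= a w IH c p U.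
case E: (brk i w) => [c0 U0].
have hi : (i == i.+1) = false by rewrite ltn_eqF.
have [-> | ha] := eqVneq a i.+1.
  case: ifP => hc.
    case: U0 E => //= p0 U0 E [<- <- <-] /=.
    rewrite (IH _ _ _ E) /= eqxx /=; do 2 f_equal; lia.
  by case=> <- <- <- /=; rewrite E hi eqxx; case: (c0) hc.
have [-> | hb] := eqVneq a i.
  case: U0 E => //= p0 U0 E [<- <- <-] /=.
  by rewrite (IH _ _ _ E) /= hi eqxx.
case: U0 E => //= p0 U0 E [<- <- <-] /=.
by rewrite (IH _ _ _ E) /= (negPf ha) (negPf hb).
Qed.

Lemma read_unreadK T w : size w = size (read T) -> read (unread (shape T) w) = w.
Proof.
move=> hs; rewrite /read /unread revK reshapeKr // sumn_rev hs /read size_flatten.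
by rewrite shape_rev sumn_rev.
Qed.

Lemma eiterS i m T : eiter i m.+1 T = obind (eiter i m) (etilde i T).
Proof.
elim: m T => [|m IH] T /=; first by case: (etilde i T).
by rewrite -/(eiter i m.+1 T) IH; case: (etilde i T).
Qed.

Lemma eiter_unmatched_neq_None i m T :
  (m <= size (brk i (read T)).2)%N -> eiter i m T != None.
Proof.
elim: m T => [|m IH] T //= hm.
rewrite -/(eiter i m.+1 T) eiterS /etilde /e_word.
case E: (brk i (read T)) => [c [|p U]]; rewrite E //= in hm.
have hp : (p < size (read T))%N.
  by have := brk_unmatched_lt_size i (read T); rewrite E /= => /andP[].
have hs : size (set_nth 0%N (read T) p i) = size (read T).
  by rewrite size_set_nth; apply/maxn_idPr.
by apply: IH; rewrite read_unreadK // (brk_set_nth_unmatched E).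
Qed.

Lemma count_mem_succ_le_eps_i i T :
  (count_mem i.+1 (read T) <= eps_i i T + count_mem i (read T))%N.
Proof.
have hU : (size (brk i (read T)).2 < (size (read T)).+1)%N.
  by rewrite ltnS size_brk_unmatched.
have hle : (size (brk i (read T)).2 <= eps_i i T)%N.
  exact: (@leq_bigmax_cond _ (fun m : 'I_(size (read T)).+1 => eiter i m T != None)
    (fun m => nat_of_ord m) (Ordinal hU) (eiter_unmatched_neq_None (leqnn _))).
by have := brk_count_mem i (read T); lia.
Qed.

Lemma omc_omega_comb f N c : omc (omega_comb f N) c = if (c < N)%N then f c else 0.
Proof.
rewrite /omc /omega_comb; case: ltnP => h; first by rewrite big_ltn // addrK.
by rewrite !big_geq ?subrr // (leq_trans h).
Qed.

Lemma wt_ge_maxentry T j : (maxentry T <= j)%N -> wt T j = 0.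
Proof.
move=> h; rewrite /wt (_ : count_mem _ _ = 0%N) //; apply/count_memPn/negP => hj.
have := @leq_bigmax_seq _ (read T) xpredT (fun a => a) j.+1 hj isT.
by rewrite big_mkcond /= -/(maxentry T) leqNgt ltnS h.
Qed.

Lemma omc_epsv_ge0 T c : 0 <= omc (epsv T) c.
Proof. by rewrite /epsv omc_omega_comb; case: ifP. Qed.

Lemma omc_epsv_ge_maxentry T c : (maxentry T <= c)%N -> omc (epsv T) c = 0.
Proof. by rewrite /epsv omc_omega_comb => h; rewrite ltnNge h. Qed.

Lemma omc_epsv_wt_ge0 T c : 0 <= omc (epsv T) c + omc (wt T) c.
Proof.
rewrite /epsv omc_omega_comb; case: ltnP => h.
  by have := count_mem_succ_le_eps_i c.+1 T; rewrite /omc /wt; lia.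
by rewrite /omc !wt_ge_maxentry ?(leq_trans h) //; lia.
Qed.

Lemma finsupp_vadd x y : finsupp x -> finsupp y -> finsupp (vadd x y).
Proof.
move=> [M hM] [N hN]; exists (maxn M N) => j; rewrite geq_max => /andP[hj1 hj2].
by rewrite /vadd hM ?hN.
Qed.

Lemma finsupp_vsub x y : finsupp x -> finsupp y -> finsupp (vsub x y).
Proof.
move=> [M hM] [N hN]; exists (maxn M N) => j; rewrite geq_max => /andP[hj1 hj2].
by rewrite /vsub hM ?hN.
Qed.

Lemma finsupp_wt T : finsupp (wt T).
Proof. by exists (maxentry T) => j; apply: wt_ge_maxentry. Qed.

Section Tuples.
Variables (k : nat) (Tp Tm : nat -> tableau).

Definition maxentry_tuple : nat :=
  (\max_(l < k) maxn (maxentry (Tp l)) (maxentry (Tm l)))%N.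

Lemma maxentry_le_tuple l : (l < k)%N ->
  (maxentry (Tp l) <= maxentry_tuple)%N /\ (maxentry (Tm l) <= maxentry_tuple)%N.
Proof.
move=> hl; apply/andP; rewrite -geq_max.
exact: (@leq_bigmax_cond _ xpredT
  (fun l : 'I_k => maxn (maxentry (Tp l)) (maxentry (Tm l))) (Ordinal hl)).
Qed.

Lemma sumwt_ge_maxentry i j : (i < k)%N -> (maxentry_tuple <= j)%N ->
  sumwt Tp Tm i j = 0.
Proof.
move=> hi hj; rewrite /sumwt big_nat; apply: big1 => l /andP[_ hl].
have [h1 h2] := maxentry_le_tuple (leq_trans hl hi).
by rewrite /wtT /vsub !wt_ge_maxentry ?subrr // (leq_trans _ hj).
Qed.

Lemma omc_S_ge_maxentry l c : (l < k)%N -> (maxentry_tuple <= c)%N ->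
  omc (Sp Tp Tm l) c = 0 /\ omc (Sm Tp Tm l) c = 0.
Proof.
move=> hl hc; have [h1 h2] := maxentry_le_tuple hl.
have e1 := omc_epsv_ge_maxentry (leq_trans h1 hc).
have e2 := omc_epsv_ge_maxentry (leq_trans h2 hc).
have w1 := wt_ge_maxentry (leq_trans h1 hc).
have w2 := wt_ge_maxentry (leq_trans h1 (leqW hc)).
have s1 := sumwt_ge_maxentry hl hc.
have s2 := sumwt_ge_maxentry hl (leqW hc).
by move: e1 e2; rewrite /omc /Sp /Sm /vadd /vsub; split; lia.
Qed.

(* [lam_min] only records omega-coordinates below [maxentry_tuple]; beyond it all
   S_i^+- vanish, hence the sign condition on [lam1]. *)
Lemma lam_min_leP (lam1 : vec) : (0 < k)%N -> (forall c, 0 <= omc lam1 c) ->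
  lel (lam_min k Tp Tm) lam1 <->
  (forall l, (l < k)%N -> lel (Sp Tp Tm l) lam1 /\ lel (Sm Tp Tm l) lam1).
Proof.
move=> hk hpos; rewrite /lam_min /lel.
split=> [hL l hl | hS c]; last first.
  rewrite omc_omega_comb -/maxentry_tuple; case: ifP => _ //.
  apply/bigmax_leP; split=> [|l _]; first by case: (hS _ hk).
  by have [h1 h2] := hS l (ltn_ord l); rewrite ge_max h1 h2.
suff hc c : omc (Sp Tp Tm l) c <= omc lam1 c /\ omc (Sm Tp Tm l) c <= omc lam1 c.
  by split=> c; case: (hc c).
case: (ltnP c maxentry_tuple) => hc; last first.
  by have [-> ->] := omc_S_ge_maxentry hl hc; rewrite !hpos.
have := hL c; rewrite omc_omega_comb -/maxentry_tuple hc => /bigmax_leP[_].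
by move=> /(_ (Ordinal hl) isT); rewrite ge_max => /andP[].
Qed.

End Tuples.

Lemma finsupp_sumwt Tp Tm i : finsupp (sumwt Tp Tm i).
Proof. by exists (maxentry_tuple i.+1 Tp Tm) => j; apply: sumwt_ge_maxentry. Qed.

Lemma sum_wtT_distinguished k nup num Tp Tm c :
  distinguished k nup num Tp Tm -> \sum_(0 <= j < k) wtT Tp Tm j c = 0.
Proof.
move=> [lam [alp [_ _ hC]]].
have hw j : (j < k)%N -> wtT Tp Tm j c = lam j c - lam (cpred k j) c.
  by move=> hj; have [[_ _ e1] [_ _ e2]] := hC j hj; rewrite /wtT /vsub -e1 -e2; lia.
case: k hC hw => [|k] _ hw; first by rewrite big_geq.
rewrite big_ltn // big_add1 /= hw //.
rewrite (eq_big_nat _ _ (F2 := fun j => lam j.+1 c - lam j c)); last first.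
  by move=> j /andP[_ hj]; rewrite hw.
by rewrite telescope_sumr //= addrA subrK subrr.
Qed.

Lemma sumwt_last_distinguished k nup num Tp Tm c : (0 < k)%N ->
  distinguished k nup num Tp Tm -> sumwt Tp Tm k.-1 c = - wtT Tp Tm 0%N c.
Proof.
move=> hk hD; have := sum_wtT_distinguished c hD.
by rewrite big_ltn // /sumwt prednK // => /eqP; rewrite addrC addr_eq0 => /eqP.
Qed.

Lemma sumwtS Tp Tm i c : sumwt Tp Tm i.+1 c = sumwt Tp Tm i c + wtT Tp Tm i.+1 c.
Proof. exact: big_nat_recr. Qed.

Lemma alpF_wt_Tm k nup num Tp Tm lam1 i j : (0 < k)%N ->
  distinguished k nup num Tp Tm ->
  alpF Tp Tm lam1 i j + wt (Tm i) j = lamF Tp Tm lam1 (cpred k i) j.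
Proof.
move=> hk hD; rewrite /alpF /lamF /vadd /vsub; case: i => [|i] /=.
  by rewrite (sumwt_last_distinguished j hk hD) /sumwt big_geq // /wtT /vsub addr0; lia.
by rewrite sumwtS /wtT /vsub; lia.
Qed.

Section Coordinates.
Variables (Tp Tm : nat -> tableau) (lam1 : vec) (i : nat).

Lemma lel_epsv_alpF_Tp :
  lel (epsv (Tp i)) (alpF Tp Tm lam1 i) <-> lel (Sp Tp Tm i) lam1.
Proof. by rewrite /lel /omc /alpF /Sp /vadd /vsub; split=> h c; have := h c; lia. Qed.

Lemma lel_epsv_alpF_Tm :
  lel (epsv (Tm i)) (alpF Tp Tm lam1 i) <-> lel (Sm Tp Tm i) lam1.
Proof. by rewrite /lel /omc /alpF /Sm /vadd /vsub; split=> h c; have := h c; lia. Qed.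

Lemma alpF_wt_Tp j : alpF Tp Tm lam1 i j + wt (Tp i) j = lamF Tp Tm lam1 i j.
Proof. by rewrite /alpF /lamF /vadd /vsub addrAC subrK. Qed.

Hypotheses (hlam1 : is_partition lam1) (hSp : lel (Sp Tp Tm i) lam1).

Lemma is_partition_alpF : is_partition (alpF Tp Tm lam1 i).
Proof.
have [hfin _] := hlam1; split.
  exact: finsupp_vadd (finsupp_vsub hfin (finsupp_wt _)) (finsupp_sumwt _ _ _).
move=> c; have := hSp c; have := omc_epsv_ge0 (Tp i) c.
by rewrite /omc /alpF /Sp /vadd /vsub; lia.
Qed.

Lemma is_partition_lamF : is_partition (lamF Tp Tm lam1 i).
Proof.
have [hfin _] := hlam1; split; first exact: finsupp_vadd hfin (finsupp_sumwt _ _ _).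
move=> c; have := hSp c; have := omc_epsv_wt_ge0 (Tp i) c.
by rewrite /omc /lamF /Sp /vadd /vsub; lia.
Qed.

End Coordinates.

Theorem mainTheorem9 (k : nat) (nup num : nat -> seq nat)
    (Tp Tm : nat -> tableau) (lam1 : vec) :
  (0 < k)%N ->
  (forall i, (i < k)%N -> is_shape (nup i) /\ is_shape (num i)) ->
  uSST k nup num Tp Tm ->
  distinguished k nup num Tp Tm ->
  is_partition lam1 ->
  ((is_ptuple k (lamF Tp Tm lam1) /\ is_ptuple k (alpF Tp Tm lam1)) /\
     uCLR k (lamF Tp Tm lam1) (alpF Tp Tm lam1) nup num Tp Tm)
  <-> lel (lam_min k Tp Tm) lam1.
Proof.
move=> hk _ hSST hD hlam1; rewrite lam_min_leP //; last by case: hlam1.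
split=> [[_ hC] l hl | hS].
  by have [[_ hp _] [_ hm _]] := hC l hl; rewrite -lel_epsv_alpF_Tp -lel_epsv_alpF_Tm.
split; first by split=> i hi; have [hp _] := hS i hi;
  [apply: is_partition_lamF | apply: is_partition_alpF].
move=> i hi; have [hp hm] := hS i hi; have [sp sm] := hSST i hi.
split; split; rewrite ?lel_epsv_alpF_Tp ?lel_epsv_alpF_Tm // => j.
  exact: alpF_wt_Tp.
exact: alpF_wt_Tm hk hD.
Qed.
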